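(* Let $G$ be a cop-win graph and let $v$ be a vertex of corner rank $k>1$. Then for every vertex $w$ that strictly corners $v$ in $G^{(k)}$, $v$ has a neighbor of corner rank $k-1$ that is not adjacent to $w$.
   Context: All graphs are finite, nonempty, and reflexive (every vertex has a loop). $N[v]$ is the closed neighborhood of $v$ (including $v$). For distinct $v,w$, $w$ strictly corners $v$ in a graph $H$ if $N_H[v]\subsetneq N_H[w]$; $v$ is then a strict corner of $H$. Corner ranking: set $G^{(1)}=G$, $k=1$. If $G^{(k)}$ is a clique, give all its vertices rank $k$ and stop. Else if $G^{(k)}$ has no strict corners, give all its vertices rank $\infty$ and stop. Else give every strict corner of $G^{(k)}$ rank $k$, delete them to get $G^{(k+1)}$ (induced subgraph), increase $k$ and repeat. A graph is cop-win iff its corner rank (largest rank of a vertex) is finite. Standing assumption: $G$ has finite corner rank at least 2. *)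

(* A finite reflexive graph is a finType T (vertices) with a
   reflexive symmetric adjacency relation e : rel T. Subgraphs G^(k) are
   induced subgraphs, represented by their vertex sets H : {set T}. *)
From mathcomp Require Import all_boot.
Set Implicit Arguments. Unset Strict Implicit. Unset Printing Implicit Defensive.

Section CornerRank.
Variables (T : finType) (e : rel T).

Definition cnbhd (H : {set T}) (v : T) : {set T} := [set u in H | e v u].

Definition strictly_corners (H : {set T}) (w v : T) : bool :=
  [&& v \in H, w \in H, w != v & cnbhd H v \proper cnbhd H w].

Definition is_strict_corner (H : {set T}) (v : T) : bool :=
  [exists w, strictly_corners H w v].

Definition strict_corners (H : {set T}) : {set T} :=
  [set v | is_strict_corner H v].

Definition is_clique (H : {set T}) : bool :=
  [forall u in H, forall v in H, e u v].

(* one deletion step: remove all strict corners (on a clique, or a graph with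
   no strict corners, this does nothing) *)
Definition corner_step (H : {set T}) : {set T} := H :\: strict_corners H.

(* G^(k), for k >= 1: G^(1) = G *)
Definition stage (k : nat) : {set T} := iter k.-1 corner_step [set: T].

Definition has_corner_rank (v : T) (k : nat) : Prop :=
  [/\ 1 <= k, v \in stage k,
      is_strict_corner (stage k) v || is_clique (stage k)
    & forall j, 1 <= j -> j < k -> ~~ is_clique (stage j)].

Definition cop_win : Prop := forall v : T, exists k, has_corner_rank v k.

End CornerRank.

(* A vertex v of rank k > 1 survived the deletion of the strict corners of
   G^(k-1), so w cannot corner it there: some neighbour u of v in G^(k-1) is
   not adjacent to w.  Since w does corner v in G^(k), u was deleted, i.e. u
   is a strict corner of G^(k-1) and has rank k-1. *)
From mathcomp Require Import all_boot.
Set Implicit Arguments. Unset Strict Implicit. Unset Printing Implicit Defensive.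

Section CornerStep.
Variables (T : finType) (e : rel T).

Lemma stageS k : 0 < k -> stage e k.+1 = corner_step e (stage e k).
Proof. by case: k => // k _; rewrite /stage iterS. Qed.

Lemma strict_cornersS (H : {set T}) : strict_corners e H \subset H.
Proof.
by apply/subsetP => u; rewrite inE => /existsP [w /and4P [uH _ _ _]].
Qed.

Lemma mem_corner_step (H : {set T}) u :
  u \in H -> (u \in corner_step e H) = (u \notin strict_corners e H).
Proof. by move=> uH; rewrite inE uH andbT. Qed.

Lemma survivor_cnbhd_not_sub (H : {set T}) v w :
  strictly_corners e (corner_step e H) w v ->
  ~~ (cnbhd e H v \subset cnbhd e H w).
Proof.
move=> /and4P [vS wS wv /properP [_ [x xw xv]]]; apply/negP => sub_vw.
have [vH vNC] : v \in H /\ v \notin strict_corners e H.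
  by move: vS; rewrite inE => /andP [].
have wH : w \in H by move: wS; rewrite inE => /andP [].
have xS : x \in corner_step e H by move: xw; rewrite inE => /andP [].
have xH : x \in H by move: xS; rewrite inE => /andP [].
case/negP: vNC; rewrite inE; apply/existsP; exists w.
rewrite /strictly_corners vH wH wv; apply/properP; split => //; exists x.
- by move: xw; rewrite !inE xH => /andP [].
- by move: xv; rewrite inE xS !inE xH.
Qed.

Lemma uncovered_nbr_of_survivor (H : {set T}) v w :
  strictly_corners e (corner_step e H) w v ->
  exists u, [/\ u \in strict_corners e H, e v u & ~~ e w u].
Proof.
move=> vw; have /subsetPn [u] := survivor_cnbhd_not_sub vw.
rewrite !inE => /andP [uH evu]; rewrite uH /= => ewu.
exists u; split => //; apply: contraNT ewu => uNC.
have : u \in cnbhd e (corner_step e H) v by rewrite inE mem_corner_step ?uNC.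
case/and4P: vw => _ _ _ /proper_sub /subsetP sub_vw.
by move/sub_vw; rewrite inE => /andP [].
Qed.

Lemma strict_corner_has_corner_rank j u :
  0 < j -> u \in strict_corners e (stage e j) ->
  (forall i, 0 < i -> i < j -> ~~ is_clique e (stage e i)) ->
  has_corner_rank e u j.
Proof.
move=> j_gt0 uC noclique; split => //; last by rewrite inE in uC; rewrite uC.
exact: subsetP (strict_cornersS _) _ uC.
Qed.

End CornerStep.

Theorem lemma3p16 (T : finType) (e : rel T)
  (e_refl : reflexive e) (e_sym : symmetric e) :
  cop_win e ->
  forall (v : T) (k : nat), has_corner_rank e v k -> 1 < k ->
  forall w : T, strictly_corners e (stage e k) w v ->
  exists u : T, [/\ e v u, has_corner_rank e u k.-1 & ~~ e u w].
Proof.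
move=> _ v k [_ _ _ noclique] k_gt1 w.
case: k k_gt1 noclique => [|[|k]] // _ noclique.
rewrite stageS // => /uncovered_nbr_of_survivor [u [uC evu ewu]].
exists u; split; [done | | by rewrite e_sym].
apply: strict_corner_has_corner_rank uC _ => // i i_gt0 lt_i_k.
exact: noclique i_gt0 (ltnW lt_i_k).
Qed.
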